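(* For all integers $x, y \in \mathbb{N}$, every set of $x$ vertices of a $y$-dimensional hypercube-like graph induces at most $\frac{1}{2} x \log x$ edges.
   Context: For $y \in \mathbb{N}$, a graph $H$ is $y$-dimensional hypercube-like if there is a partition $V(H) = \bigcup_{S \subseteq [y]} V_S$ (parts may be empty) such that: (1) for every edge $uv \in E(H)$ there are $S, T \subseteq [y]$ with $|S \triangle T| = 1$, $u \in V_S$ and $v \in V_T$; (2) for all $S, T \subseteq [y]$ with $|S \triangle T| = 1$, the bipartite graph $H[V_S, V_T]$ of edges between $V_S$ and $V_T$ is a matching (not necessarily perfect or non-empty). Logarithms are in base 2. *)

From mathcomp Require Import all_boot.
From Stdlib Require Import Reals.
Set Implicit Arguments. Unset Strict Implicit. Unset Printing Implicit Defensive.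

Definition simple_graph (T : finType) (e : rel T) : Prop :=
  symmetric e /\ irreflexive e.

Definition symdiff (y : nat) (S U : {set 'I_y}) : {set 'I_y} :=
  (S :\: U) :|: (U :\: S).

(* f assigns to each vertex the index S of the part V_S containing it,
   so V_S = f^{-1}(S); this is exactly a partition into (possibly empty)
   parts indexed by subsets of [y].
   (1) every edge joins parts V_S, V_U with |S △ U| = 1;
   (2) for |S △ U| = 1, the edges between V_S and V_U form a matching:
       no vertex of V_S has two distinct neighbours in V_U (the other side
       is covered by swapping S and U). *)
Definition hypercube_like_partition (T : finType) (e : rel T) (y : nat)
    (f : T -> {set 'I_y}) : Prop :=
  (forall u v, e u v -> #|symdiff (f u) (f v)| = 1%N) /\
  (forall S U : {set 'I_y}, #|symdiff S U| = 1%N ->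
     forall u v w, f u = S -> f v = U -> f w = U ->
       e u v -> e u w -> v = w).

Definition hypercube_like (T : finType) (e : rel T) (y : nat) : Prop :=
  exists f : T -> {set 'I_y}, hypercube_like_partition e f.

Definition induced_edges (T : finType) (e : rel T) (X : {set T}) : {set {set T}} :=
  [set E : {set T} | (E \subset X) &&
     [exists u : T, exists v : T, e u v && (E == [set u; v])]].

Definition log2 (r : R) : R := (ln r / ln 2)%R.

(* Take an edge uv inside X and a coordinate i on which the parts of u and v
   differ, and cut X according to coordinate i.  An edge changes exactly one
   coordinate, so by the matching condition every vertex has at most one
   neighbour across the cut, and at most min(|X0|, |X1|) edges cross it.
   Induction on |X| then reduces the bound g(|X|), g(n) = n log n / 2, to
   g(a) + g(b) + min(a, b) <= g(a + b), which holds because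
   t |-> (a + t) ln (a + t) - t ln t is increasing. *)

From mathcomp Require Import all_boot.
From Stdlib Require Import Reals Lra.
From Coquelicot Require Import Coquelicot.

Set Implicit Arguments.
Unset Strict Implicit.
Unset Printing Implicit Defensive.

Local Open Scope nat_scope.

Section RealInequality.

Local Open Scope R_scope.

Lemma xlnx_ge0 (n : nat) : 0 <= INR n * ln (INR n).
Proof.
case: n => [|[|n]]; first by rewrite /=; lra.
  by rewrite /= ln_1; lra.
apply: Rmult_le_pos; first exact: pos_INR.
rewrite -ln_1; apply: Rlt_le; apply: ln_increasing; first lra.
by apply: (lt_INR 1); apply/ltP.
Qed.

(* [t |-> (A + t) ln (A + t) - t ln t] is increasing, and at [t = A] it equals
   [A ln A + 2 ln 2 A]. *)
Lemma xlnx_add_ge (A B : R) : 0 < A -> A <= B ->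
  A * ln A + B * ln B + 2 * ln 2 * A <= (A + B) * ln (A + B).
Proof.
move=> A_gt0 le_AB.
pose phi t := (A + t) * ln (A + t) - t * ln t.
have phiA : phi A = A * ln A + 2 * ln 2 * A.
  rewrite /phi; have -> : A + A = 2 * A by ring.
  by rewrite ln_mult; lra.
suff : phi A <= phi B by rewrite /phi in phiA *; lra.
case: le_AB => [A_lt_B | <-]; last exact: Rle_refl.
have [c [phi_diff c_in]] :
    exists c, phi B - phi A = (ln (A + c) - ln c) * (B - A) /\ A < c < B.
  apply: (MVT_cor2 phi (fun c => ln (A + c) - ln c)) => // c c_in.
  apply/is_derive_Reals; rewrite /phi; auto_derive; first by repeat split; lra.
  by field; lra.
have ln_gap : 0 < ln (A + c) - ln c.
  by have := ln_increasing c (A + c); lra.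
have := Rmult_lt_0_compat _ _ ln_gap (proj2 (Rlt_0_minus _ _) A_lt_B).
lra.
Qed.

Definition half_nlog2n (n : nat) : R := / 2 * INR n * log2 (INR n).

Lemma ln2_gt0 : 0 < ln 2.
Proof. by have := ln_lt_2; lra. Qed.

Lemma half_nlog2n_eq (n : nat) :
  half_nlog2n n = INR n * ln (INR n) / (2 * ln 2).
Proof. by rewrite /half_nlog2n /log2; have := ln2_gt0 => ?; field; lra. Qed.

Lemma half_nlog2n_ge0 (n : nat) : 0 <= half_nlog2n n.
Proof.
rewrite half_nlog2n_eq; apply: Rmult_le_pos; first exact: xlnx_ge0.
by apply: Rlt_le; apply: Rinv_0_lt_compat; have := ln2_gt0; lra.
Qed.

Lemma half_nlog2n_add_ge (a b : nat) : (a <= b)%nat ->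
  half_nlog2n a + half_nlog2n b + INR a <= half_nlog2n (a + b)%nat.
Proof.
case: a => [|a] le_ab.
  by rewrite add0n /half_nlog2n /= Rmult_0_r Rmult_0_l; lra.
rewrite !half_nlog2n_eq plus_INR.
have A_gt0 : 0 < INR a.+1 by apply: lt_0_INR; apply/ltP.
have le_AB : INR a.+1 <= INR b by apply: le_INR; apply/leP.
have := xlnx_add_ge A_gt0 le_AB; have := ln2_gt0.
set A := INR a.+1; set B := INR b => ln2_pos key.
apply: (Rmult_le_reg_r (2 * ln 2)); first lra.
have -> : (A * ln A / (2 * ln 2) + B * ln B / (2 * ln 2) + A) * (2 * ln 2)
          = A * ln A + B * ln B + 2 * ln 2 * A by field; lra.
have -> : (A + B) * ln (A + B) / (2 * ln 2) * (2 * ln 2)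
          = (A + B) * ln (A + B) by field; lra.
exact: key.
Qed.

Lemma half_nlog2n_add_min (a b : nat) :
  half_nlog2n a + half_nlog2n b + INR (minn a b) <= half_nlog2n (a + b)%nat.
Proof.
case: (leqP a b) => [le_ab | /ltnW le_ba]; first exact: half_nlog2n_add_ge.
by rewrite addnC (Rplus_comm (half_nlog2n a)); exact: half_nlog2n_add_ge.
Qed.

End RealInequality.

Section InducedEdges.

Variables (T : finType) (e : rel T).

Lemma induced_edgesP (X E : {set T}) :
  reflect (exists u v, [/\ e u v, u \in X, v \in X & E = [set u; v]])
          (E \in induced_edges e X).
Proof.
rewrite inE; apply: (iffP andP).
  move=> [EX /existsP [u /existsP [v /andP [euv /eqP defE]]]].
  exists u, v; split=> //; apply: (subsetP EX); rewrite defE !inE eqxx ?orbT //.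
move=> [u [v [euv uX vX ->]]]; split; first by rewrite subUset !sub1set uX vX.
by apply/existsP; exists u; apply/existsP; exists v; rewrite euv eqxx.
Qed.

Definition cross_edges (A B : {set T}) : {set {set T}} :=
  [set E in induced_edges e (A :|: B) | ~~ (E \subset A) && ~~ (E \subset B)].

Lemma cross_edgesC (A B : {set T}) : cross_edges A B = cross_edges B A.
Proof.
apply/setP => E; rewrite !inE setUC.
by case: (E \subset A); case: (E \subset B); rewrite ?andbF.
Qed.

Lemma card_induced_edges_setU (A B : {set T}) :
  #|induced_edges e (A :|: B)|
    <= #|induced_edges e A| + #|induced_edges e B| + #|cross_edges A B|.
Proof.
have sub : induced_edges e (A :|: B)
           \subset induced_edges e A :|: induced_edges e B :|: cross_edges A B.
  apply/subsetP => E; rewrite !inE => /andP [-> ->]; rewrite !andbT.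
  by case: (E \subset A); case: (E \subset B).
apply: leq_trans (subset_leq_card sub) _.
apply: leq_trans (leq_card_setU _ _) _; rewrite leq_add2r.
exact: leq_card_setU.
Qed.

End InducedEdges.

Lemma in_symdiff (y : nat) (S U : {set 'I_y}) (j : 'I_y) :
  (j \in symdiff S U) = ((j \in S) != (j \in U)).
Proof. by rewrite !inE; case: (j \in S); case: (j \in U). Qed.

Lemma symdiff_inj (y : nat) (S : {set 'I_y}) : injective (symdiff S).
Proof.
move=> U W eqSUW; apply/setP => j.
have := congr1 (fun D : {set 'I_y} => j \in D) eqSUW; rewrite /= !in_symdiff.
by case: (j \in S); case: (j \in U); case: (j \in W).
Qed.

Lemma symdiff_card1 (y : nat) (S U : {set 'I_y}) (i : 'I_y) :
  #|symdiff S U| = 1 -> (i \in S) != (i \in U) -> symdiff S U = [set i].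
Proof.
move=> /eqP /cards1P [k defSU] sep_i.
have : i \in symdiff S U by rewrite in_symdiff.
by rewrite defSU inE => /eqP <-.
Qed.

Section HypercubeLike.

Variables (y : nat) (T : finType) (e : rel T) (f : T -> {set 'I_y}).
Hypothesis e_sym : symmetric e.
Hypothesis f_hcl : hypercube_like_partition e f.

Lemma edge_separated (u v : T) :
  e u v -> exists i, (i \in f u) != (i \in f v).
Proof.
move=> /(proj1 f_hcl) /eqP /cards1P [i def_i]; exists i.
by rewrite -in_symdiff def_i set11.
Qed.

Lemma neighbour_across_uniq (u v w : T) (i : 'I_y) :
  e u v -> e u w -> (i \in f u) != (i \in f v) -> (i \in f u) != (i \in f w) ->
  v = w.
Proof.
move=> euv euw sep_v sep_w; have [f_edge f_match] := f_hcl.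
apply: (f_match _ _ (f_edge u v euv) u v w erefl erefl _ euv euw).
apply: (@symdiff_inj _ (f u)).
by rewrite (symdiff_card1 (f_edge _ _ euv) sep_v)
           (symdiff_card1 (f_edge _ _ euw) sep_w).
Qed.

Lemma card_cross_edges_le (A B : {set T}) (i : 'I_y) :
  (forall a b, a \in A -> b \in B -> (i \in f a) != (i \in f b)) ->
  #|cross_edges e A B| <= #|A|.
Proof.
move=> sepAB.
pose g a := if [pick b in B | e a b] is Some b then [set a; b] else set0.
have gE a b : a \in A -> b \in B -> e a b -> g a = [set a; b].
  move=> aA bB eab; rewrite /g; case: pickP => [b' /andP [b'B eab'] | none].
    by rewrite (neighbour_across_uniq eab' eab (sepAB _ _ aA b'B) (sepAB _ _ aA bB)).
  by move: (none b); rewrite bB eab.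
apply: leq_trans (leq_imset_card g A); apply: subset_leq_card.
apply/subsetP => E; rewrite inE => /andP [/induced_edgesP [u [v [euv uAB vAB defE]]]].
rewrite defE !subUset !sub1set => /andP [uvA uvB].
move: uAB vAB uvA uvB; rewrite !inE.
case/orP=> [uA | uB]; case/orP=> [vA | vB]; rewrite ?uA ?vA ?uB ?vB //= => _ _.
- by apply/imsetP; exists u; rewrite // (gE u v).
- by apply/imsetP; exists v; rewrite // (gE v u) 1?setUC // e_sym.
Qed.

Lemma card_induced_edges_cut (A B : {set T}) (i : 'I_y) :
  (forall a b, a \in A -> b \in B -> (i \in f a) != (i \in f b)) ->
  #|induced_edges e (A :|: B)|
    <= #|induced_edges e A| + #|induced_edges e B| + minn #|A| #|B|.
Proof.
move=> sepAB; apply: leq_trans (card_induced_edges_setU e A B) _.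
rewrite leq_add2l leq_min (card_cross_edges_le sepAB) /= cross_edgesC.
by apply: (@card_cross_edges_le _ _ i) => b a bB aA; rewrite eq_sym sepAB.
Qed.

Lemma card_induced_edges_le (X : {set T}) :
  (INR #|induced_edges e X| <= half_nlog2n #|X|)%R.
Proof.
have [n] := ubnP #|X|; elim: n X => // n IH X; rewrite ltnS => X_le.
have [-> | [E]] := set_0Vmem (induced_edges e X).
  by rewrite cards0; apply: half_nlog2n_ge0.
case/induced_edgesP => u [v [euv uX vX _]].
have [i sep_uv] := edge_separated euv.
pose P := [set z | (i \in f z) == (i \in f u)].
have sepAB a b : a \in X :&: P -> b \in X :\: P -> (i \in f a) != (i \in f b).
  by rewrite !inE => /andP [_ /eqP ->] /andP [b_notin_P _]; rewrite eq_sym.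
have uA : u \in X :&: P by rewrite !inE uX eqxx.
have vB : v \in X :\: P by rewrite !inE vX eq_sym sep_uv.
have card_X := cardsID P X.
have ltA : #|X :&: P| < n.
  apply: leq_trans X_le; rewrite -card_X -addn1 leq_add2l card_gt0.
  by apply/set0Pn; exists v.
have ltB : #|X :\: P| < n.
  apply: leq_trans X_le; rewrite -card_X -add1n leq_add2r card_gt0.
  by apply/set0Pn; exists u.
have /leP/le_INR := card_induced_edges_cut sepAB.
rewrite setID => /Rle_trans; apply; rewrite !plus_INR -card_X.
apply: Rle_trans (half_nlog2n_add_min _ _).
by apply: Rplus_le_compat_r; apply: Rplus_le_compat; apply: IH.
Qed.

End HypercubeLike.

Theorem lemma5p1 (y : nat) (T : finType) (e : rel T) :
  simple_graph e -> hypercube_like e y ->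
  forall (x : nat) (X : {set T}), #|X| = x ->
    (INR #|induced_edges e X| <= / 2 * INR x * log2 (INR x))%R.
Proof.
move=> [e_sym _] [f f_hcl] x X <-.
exact: card_induced_edges_le e_sym f_hcl X.
Qed.
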